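(* Let $R$ be a ring, $S=\mathrm{Spec}\,R$, $A$ a finite abelian group, and $\pi\colon X\to S$ a $D(A)$-cover all of whose line bundles $\mathcal{L}_\lambda$ are trivial, with chosen generators $v_\lambda$ of $\mathcal{L}_\lambda$ ($v_0=1$) so that $v_\lambda v_{\lambda'}=s_{\lambda,\lambda'}v_{\lambda+\lambda'}$ with $s_{\lambda,\lambda'}\in R$. Then $X$ is the spectrum of $$R[\{v_\lambda\}_{\lambda\in A}]/(\{v_\lambda v_{\lambda'}-s_{\lambda,\lambda'}v_{\lambda+\lambda'}\}_{\lambda,\lambda'\in A}),$$ and the discriminant ideal of $\pi$ is $$d(\pi)=\Big(|A|^{|A|}\prod_{\lambda\in A}s_{\lambda,-\lambda}\Big).$$
   Context: A $D(A)$-cover is a finite locally free $f\colon X\to S$ with an action of $D(A)=\mathrm{Spec}\,\mathcal{O}_S[A]$ such that fppf locally $f_*\mathcal{O}_X$ is the regular representation as a comodule; equivalently $f_*\mathcal{O}_X=\bigoplus_{\lambda\in A}\mathcal{L}_\lambda$ with line bundles $\mathcal{L}_\lambda$, $\mathcal{L}_0=\mathcal{O}_S$, and multiplication maps $\mathcal{L}_\lambda\otimes\mathcal{L}_{\lambda'}\to\mathcal{L}_{\lambda+\lambda'}$. The discriminant ideal $d(\pi)$ is the ideal generated by the determinant of the trace pairing $(x,y)\mapsto\mathrm{Tr}(xy)$ of the finite free algebra $\mathcal{O}_X$ over $R$ (locally, in general). *)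

From HB Require Import structures.
From mathcomp Require Import all_boot all_order all_algebra.
Set Implicit Arguments. Unset Strict Implicit. Unset Printing Implicit Defensive.
Import GRing.Theory.
Local Open Scope ring_scope.

(* A D(A)-cover of Spec R with trivial line bundles L_lambda = R v_lambda is
   an R-algebra B which is free with basis (v_lambda)_{lambda in A}.
   [crd b lambda] is the lambda-th coordinate of b in that basis. *)

Definition trace_wrt (R : comNzRingType) (A : finType) (B : comAlgType R)
  (v : A -> B) (crd : B -> A -> R) (b : B) : R :=
  \sum_(l : A) crd (b * v l) l.

(* determinant of the trace pairing (x,y) |-> Tr(xy) in the basis v;
   the discriminant ideal d(pi) is the ideal generated by this element *)
Definition disc_wrt (R : comNzRingType) (A : finType) (B : comAlgType R)
  (v : A -> B) (crd : B -> A -> R) : R :=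
  \det (\matrix_(i < #|A|, j < #|A|)
          trace_wrt v crd (v (enum_val i) * v (enum_val j))).

Definition same_principal_ideal (R : comNzRingType) (a b : R) : Prop :=
  (exists x, a = x * b) /\ (exists y, b = y * a).

From HB Require Import structures.
From mathcomp Require Import all_boot all_order all_algebra fingroup perm.
Set Implicit Arguments. Unset Strict Implicit. Unset Printing Implicit Defensive.
Import GRing.Theory.
Local Open Scope ring_scope.

(* Since v_l v_l' lies in R v_(l+l'), multiplication by v_i v_j permutes the
   basis lines by translation by i + j, so its trace vanishes unless
   i + j = 0, in which case it is |A| s_(i,j) (using s_(0,l) = 1).  The trace
   matrix is therefore a diagonal matrix times the permutation matrix of
   l |-> -l, whose determinant is +-|A|^|A| prod_l s_(l,-l).  The universal
   property holds because an R-linear map out of B is determined by its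
   values on the basis, and multiplicativity only has to be checked there. *)

Section FreeAlgebraWithBasis.

Variables (R : comNzRingType) (A : finZmodType) (B : comAlgType R).
Variables (v : A -> B) (crd : B -> A -> R) (s : A -> A -> R).
Hypothesis v_span : forall b : B, b = \sum_(l : A) crd b l *: v l.
Hypothesis v_free :
  forall c : A -> R, \sum_(l : A) c l *: v l = 0 -> forall l, c l = 0.
Hypothesis v0 : v 0 = 1.
Hypothesis vM : forall l l' : A, v l * v l' = s l l' *: v (l + l').

Lemma crd_sum (c : A -> R) k : crd (\sum_(l : A) c l *: v l) k = c k.
Proof.
set b := \sum_l _.
have : \sum_(l : A) (crd b l - c l) *: v l = 0.
  by under eq_bigr do rewrite scalerBl; rewrite sumrB -v_span subrr.
by move/v_free/(_ k)/eqP; rewrite subr_eq0 => /eqP.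
Qed.

Lemma crdD b b' k : crd (b + b') k = crd b k + crd b' k.
Proof.
rewrite {1}(v_span b) {1}(v_span b') -big_split /=.
by under eq_bigr do rewrite -scalerDl; rewrite crd_sum.
Qed.

Lemma crdZ (a : R) b k : crd (a *: b) k = a * crd b k.
Proof.
rewrite {1}(v_span b) scaler_sumr.
by under eq_bigr do rewrite scalerA; rewrite crd_sum.
Qed.

Lemma crd_scale_basis (r : R) l k : crd (r *: v l) k = (k == l)%:R * r.
Proof.
rewrite -(crd_sum (fun i => (i == l)%:R * r) k) (bigD1 l) //= eqxx mul1r.
by rewrite big1 ?addr0 // => i /negbTE ->; rewrite mul0r scale0r.
Qed.

Lemma crd_basis l k : crd (v l) k = (k == l)%:R.
Proof. by rewrite -[v l]scale1r crd_scale_basis mulr1. Qed.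

Lemma s0l l : s 0 l = 1.
Proof.
have : s 0 l *: v l = v l by rewrite -{2}(add0r l) -vM v0 mul1r.
by move/(congr1 (crd^~ l)); rewrite crd_scale_basis crd_basis eqxx mul1r.
Qed.

Section UniversalProperty.

Variables (C : comAlgType R) (w : A -> C).
Hypothesis w0 : w 0 = 1.
Hypothesis wM : forall l l' : A, w l * w l' = s l l' *: w (l + l').

Definition lift (b : B) : C := \sum_(l : A) crd b l *: w l.

Lemma lift_is_linear : linear lift.
Proof.
move=> a b b'; rewrite /lift scaler_sumr -big_split /=; apply: eq_bigr => l _.
by rewrite crdD crdZ scalerDl scalerA.
Qed.

HB.instance Definition _ := GRing.isLinear.Build R B C *:%R lift lift_is_linear.

Lemma lift_basis l : lift (v l) = w l.
Proof.
rewrite /lift (bigD1 l) //= crd_basis eqxx scale1r big1 ?addr0 // => k.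
by rewrite crd_basis => /negbTE ->; rewrite scale0r.
Qed.

Lemma lift_is_monoid_morphism : monoid_morphism lift.
Proof.
split; first by rewrite -v0 lift_basis.
have liftM_basis i j : lift (v i * v j) = lift (v i) * lift (v j).
  by rewrite vM linearZ /= !lift_basis wM.
move=> b b'; rewrite (v_span b) (v_span b') mulr_suml !linear_sum mulr_suml.
apply: eq_bigr => i _; rewrite mulr_sumr !linear_sum mulr_sumr.
apply: eq_bigr => j _.
by rewrite -scalerAl -scalerAr !linearZ /= liftM_basis -scalerAl -scalerAr.
Qed.

HB.instance Definition _ :=
  GRing.isMonoidMorphism.Build B C lift lift_is_monoid_morphism.

Definition lift_lrmorphism : {lrmorphism B -> C} := lift.

End UniversalProperty.

Lemma linear_eq_on_basis (C : lmodType R) (f g : {linear B -> C}) :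
  (forall l, f (v l) = g (v l)) -> f =1 g.
Proof.
move=> fg b; rewrite (v_span b) !linear_sum; apply: eq_bigr => l _.
by rewrite !linearZ /= fg.
Qed.

Lemma trace_mul_basis i j :
  trace_wrt v crd (v i * v j) = (i + j == 0)%:R * (s i j * #|A|%:R).
Proof.
rewrite /trace_wrt.
under eq_bigr do rewrite vM -scalerAl vM scalerA crd_scale_basis.
have [-> | ij_neq0] := eqVneq (i + j) 0.
  under eq_bigr do rewrite add0r eqxx mul1r s0l mulr1.
  by rewrite sumr_const mulr_natr mul1r.
rewrite mul0r big1 // => l _.
have -> : (l == i + j + l) = false.
  by apply: contra_neqF ij_neq0; rewrite -{1}[l]add0r => /eqP/addIr <-.
by rewrite mul0r.
Qed.

Definition opp_rank (i : 'I_#|A|) : 'I_#|A| := enum_rank (- enum_val i).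

Lemma opp_rank_inj : injective opp_rank.
Proof. by move=> i j /enum_rank_inj /oppr_inj /enum_val_inj. Qed.

Definition opp_perm : 'S_#|A| := perm opp_rank_inj.

Lemma trace_form_mx_monomial :
  \matrix_(i < #|A|, j < #|A|) trace_wrt v crd (v (enum_val i) * v (enum_val j))
  = diag_mx (\row_i (s (enum_val i) (- enum_val i) * #|A|%:R))
      *m perm_mx opp_perm.
Proof.
apply/matrixP => i j; rewrite mul_diag_mx !mxE trace_mul_basis permE mulrC.
rewrite /opp_rank -(inj_eq enum_val_inj) enum_rankK.
have [<-|neq] := eqVneq (- enum_val i) (enum_val j); first by rewrite subrr eqxx.
have -> : (enum_val i + enum_val j == 0) = false.
  by apply: contra_neqF neq; rewrite addr_eq0 => /eqP ->; rewrite opprK.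
by rewrite !mulr0.
Qed.

Lemma disc_wrt_sign :
  disc_wrt v crd
  = (-1) ^+ opp_perm * ((#|A|%:R) ^+ #|A| * \prod_(l : A) s l (- l)).
Proof.
rewrite /disc_wrt trace_form_mx_monomial det_mulmx det_diag det_perm mulrC.
congr (_ * _); under eq_bigr do rewrite mxE.
rewrite big_split /= prodr_const card_ord mulrC.
by rewrite (big_enum_val (fun l => s l (- l))).
Qed.

End FreeAlgebraWithBasis.

Lemma same_principal_ideal_signr (R : comNzRingType) (b : R) (k : bool) :
  same_principal_ideal ((-1) ^+ k * b) b.
Proof. by split; exists ((-1) ^+ k); rewrite // mulrA -expr2 sqrr_sign mul1r. Qed.

Theorem lemma2p27 (R : comNzRingType) (A : finZmodType) (B : comAlgType R)
  (v : A -> B) (crd : B -> A -> R) (s : A -> A -> R)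
  (* v is an R-basis of B, with coordinate functional crd *)
  (Hspan : forall b : B, b = \sum_(l : A) crd b l *: v l)
  (Hfree : forall c : A -> R, \sum_(l : A) c l *: v l = 0 -> forall l, c l = 0)
  (Hv0 : v 0 = 1)
  (Hmul : forall l l' : A, v l * v l' = s l l' *: v (l + l')) :
  (* B is the R-algebra presented by generators v_l and relations
     v_l v_l' = s_{l,l'} v_{l+l'} (with v_0 = 1): universal property *)
  (forall (C : comAlgType R) (w : A -> C),
      w 0 = 1 ->
      (forall l l' : A, w l * w l' = s l l' *: w (l + l')) ->
      exists f : {lrmorphism B -> C},
        (forall l, f (v l) = w l) /\
        (forall g : {lrmorphism B -> C}, (forall l, g (v l) = w l) -> g =1 f))
  /\
  (* d(pi) = ( |A|^|A| * prod_l s_{l,-l} ) *)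
  same_principal_ideal (disc_wrt v crd)
    ((#|A|%:R) ^+ #|A| * \prod_(l : A) s l (- l)).
Proof.
split.
  move=> C w w0 wM; set f := lift_lrmorphism Hspan Hfree Hv0 Hmul w0 wM.
  have fv l : f (v l) = w l by apply: lift_basis.
  exists f; split=> // g gv.
  by apply: (linear_eq_on_basis Hspan) => l; rewrite [LHS]gv -fv.
rewrite (disc_wrt_sign Hspan Hfree Hv0 Hmul).
exact: same_principal_ideal_signr.
Qed.
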